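(* Let $M$ be a finite set and $q,\eta\in\Delta M$. Then $q$ can be induced from $\eta$ if and only if (1) $\mathrm{supp}(\eta)\subseteq\mathrm{supp}(q)$, and (2) $\mathbb{E}_\eta[\log q]=\mathbb{E}_q[\log q]$, i.e. $\sum_m\eta_m\log q_m=\sum_m q_m\log q_m$.
   Context: A belief $q\in\Delta M$ can be induced from $\eta\in\Delta M$ if there exists a set $\mathcal{F}\subseteq\{f:M\to\mathbb{R}\}$ such that $q$ is the unique maximizer of the Shannon entropy $\mathcal{H}(q')=-\sum_mq'_m\log q'_m$ over $\Delta_{\mathcal{D}}=\{q'\in\Delta M:\sum_mq'_mf(m)=\sum_m\eta_mf(m)\ \forall f\in\mathcal{F}\}$. Convention $0\log0=0$; sums are over the support where terms are otherwise undefined. *)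

From HB Require Import structures.
From mathcomp Require Import all_boot all_order all_algebra.
From mathcomp Require Import all_classical all_reals exp.
Set Implicit Arguments. Unset Strict Implicit. Unset Printing Implicit Defensive.
Import Order.TTheory GRing.Theory Num.Theory.
Local Open Scope ring_scope.

Definition simplex (R : realType) (M : finType) (p : M -> R) : Prop :=
  (forall m, 0 <= p m) /\ \sum_(m : M) p m = 1.

Definition supp (R : realType) (M : finType) (p : M -> R) : M -> Prop :=
  fun m => 0 < p m.

(* Shannon entropy, with the convention 0 log 0 = 0 (sum over support). *)
Definition entropy (R : realType) (M : finType) (p : M -> R) : R :=
  - \sum_(m : M | 0 < p m) p m * ln (p m).

Definition DeltaD (R : realType) (M : finType) (F : (M -> R) -> Prop)
    (eta : M -> R) (q' : M -> R) : Prop :=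
  simplex q' /\
  forall f, F f -> \sum_(m : M) q' m * f m = \sum_(m : M) eta m * f m.

Definition inducible (R : realType) (M : finType) (q eta : M -> R) : Prop :=
  exists F : (M -> R) -> Prop,
    DeltaD F eta q /\
    forall q', DeltaD F eta q' -> q' <> q -> entropy q' < entropy q.

(* If q is the unique entropy maximizer on Delta_D, then Delta_D contains the
   line q_s = q + s (eta - q) wherever it is nonnegative, and Gibbs' inequality
   at q_s gives H(q) - H(q_s) <= s * sum_m (eta_m - q_m) ln q_s(m); hence
   s * sum_m (eta_m - q_m) ln q_s(m) > 0 for small s <> 0.  If eta charges a point
   outside supp q, this sum tends to -oo as s decreases to 0; otherwise it tends
   to sum_m (eta_m - q_m) ln q_m, which must then vanish.  Conversely, under (1)
   and (2) the constraints f = ln q and f = indicator of the complement of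
   supp q confine every q' in Delta_D to supp q with
   sum_m q'_m ln q_m = sum_m q_m ln q_m, and Gibbs' inequality yields
   H(q') < - sum_m q'_m ln q_m = H(q) for q' <> q. *)

From HB Require Import structures.
From mathcomp Require Import all_boot all_order all_algebra.
From mathcomp Require Import all_classical all_reals exp topology normedtype.
From mathcomp Require Import ring lra.
Set Implicit Arguments. Unset Strict Implicit. Unset Printing Implicit Defensive.
Import Order.TTheory GRing.Theory Num.Theory numFieldNormedType.Exports.
Local Open Scope classical_set_scope.
Local Open Scope ring_scope.

Section RealFacts.
Variable R : realType.
Implicit Types x y s : R.

Lemma ln_lt_subr1 x : 0 < x -> x != 1 -> ln x < x - 1.
Proof.
move=> x0 x1; rewrite -ltr_expR lnK ?posrE //.
by rewrite -[X in X < _](subrK 1) addrC expR_gt1Dx // subr_eq0.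
Qed.

Lemma mul_lnB_lt x y : 0 <= x -> 0 <= y -> (0 < x -> 0 < y) -> x != y ->
  x * (ln y - ln x) < y - x.
Proof.
move=> x0 y0 xy neq_xy; have [x_eq0|xn0] := eqVneq x 0.
  by rewrite x_eq0 mul0r subr0 lt0r y0 andbT eq_sym -x_eq0.
have xp : 0 < x by rewrite lt0r xn0 x0.
have yp := xy xp.
have yx1 : y / x != 1.
  by apply: contra neq_xy => /eqP yx; rewrite -(divfK xn0 y) yx mul1r.
have := ln_lt_subr1 (divr_gt0 yp xp) yx1.
rewrite ln_div ?posrE // -(ltr_pM2l xp).
by rewrite [X in _ < X -> _]mulrBr mulr1 mulrCA divff ?mulr1.
Qed.

Lemma mul_lnB_le x y : 0 <= x -> 0 <= y -> (0 < x -> 0 < y) ->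
  x * (ln y - ln x) <= y - x.
Proof.
move=> x0 y0 xy; have [->|neq_xy] := eqVneq x y; first by rewrite !subrr mulr0.
exact/ltW/mul_lnB_lt.
Qed.

Lemma mul_ln_mulr_le x s : 0 <= x <= 1 -> 0 < s -> x * ln (s * x) <= x * ln s.
Proof.
move=> /andP[x0 x1] s0; have [->|xn0] := eqVneq x 0; first by rewrite !mul0r.
have xp : 0 < x by rewrite lt0r xn0.
by rewrite lnM ?posrE // mulrDr gerDl pmulr_rle0 // ln_le0.
Qed.

Lemma cvg_eq0_sign_change (G : R -> R) (D : R) : G s @[s --> (0 : R)] --> D ->
  (\forall s \near (0 : R), s != 0 -> 0 < s * G s) -> D = 0.
Proof.
move=> GD sG; apply/eqP; rewrite eq_le !leNgt; apply/andP; split; apply/negP => D0.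
- suff: \forall s \near (0 : R)^'-, False by move=> /filter_ex[].
  near=> s.
  have : 0 < G s by near: s; exact: cvgr_gt (cvg_at_left_filter GD) _ D0.
  have s_lt0 : s < 0 by near: s; exact: nbhs_left_lt.
  have : 0 < s * G s.
    by apply: (near (cvg_within _ sG) s) => //; rewrite lt_eqF.
  by rewrite nmulr_rgt0 //; lra.
- suff: \forall s \near (0 : R)^'+, False by move=> /filter_ex[].
  near=> s.
  have : G s < 0 by near: s; exact: cvgr_lt (cvg_at_right_filter GD) _ D0.
  have s_gt0 : 0 < s by near: s; exact: nbhs_right_gt.
  have : 0 < s * G s.
    by apply: (near (cvg_within _ sG) s) => //; rewrite gt_eqF.
  by rewrite pmulr_rgt0 //; lra.
Unshelve. all: by end_near.
Qed.

End RealFacts.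

Section InducedBelief.
Variables (R : realType) (M : finType).
Implicit Types (p q eta : M -> R) (F : (M -> R) -> Prop) (s : R).

Definition entropy_maximizer F eta q :=
  DeltaD F eta q /\ forall q', DeltaD F eta q' -> q' <> q -> entropy q' < entropy q.

Definition mix q eta s : M -> R := fun m => q m + s * (eta m - q m).

Lemma simplex_le1 p m : simplex p -> p m <= 1.
Proof. by move=> [p0 <-]; rewrite (bigD1 m) //= lerDl sumr_ge0. Qed.

Lemma simplex_supp0 p m : simplex p -> ~~ (0 < p m) -> p m = 0.
Proof. by move=> [p0 _]; rewrite lt0r p0 andbT negbK => /eqP. Qed.

(* [ln x = 0] for [x <= 0], so the support restriction is vacuous. *)
Lemma sum_supp_ln (a p : M -> R) :
  \sum_(m | 0 < p m) a m * ln (p m) = \sum_m a m * ln (p m).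
Proof. by apply: big_rmcond => m; rewrite -leNgt => /ln0 ->; rewrite mulr0. Qed.

Lemma entropyE p : entropy p = - \sum_m p m * ln (p m).
Proof. by rewrite /entropy sum_supp_ln. Qed.

Lemma gibbs_lt p q : simplex p -> simplex q -> (forall m, 0 < p m -> 0 < q m) ->
  p <> q -> entropy p < - \sum_m p m * ln (q m).
Proof.
move=> [p0 p1] [q0 q1] pq neq_pq.
have /existsNP[m0 /eqP neq_m0] : ~ forall m, p m = q m.
  by move=> eq_pq; apply/neq_pq/funext.
have : \sum_m p m * (ln (q m) - ln (p m)) < \sum_m (q m - p m).
  rewrite (bigD1 m0) //= [X in _ < X](bigD1 m0) //=.
  apply: ltr_leD; first exact: mul_lnB_lt (p0 m0) (q0 m0) (pq m0) neq_m0.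
  by apply: ler_sum => m _; apply: mul_lnB_le (p0 m) (q0 m) (pq m).
rewrite sumrB p1 q1 subrr entropyE.
under eq_bigr do rewrite mulrBr.
rewrite sumrB; lra.
Qed.

Lemma gibbs_le p q : simplex p -> simplex q -> (forall m, 0 < p m -> 0 < q m) ->
  entropy p <= - \sum_m p m * ln (q m).
Proof.
move=> p_sx q_sx pq; have [->|neq_pq] := pselect (p = q).
  by rewrite entropyE.
exact/ltW/gibbs_lt.
Qed.

Lemma mixE q eta s m : mix q eta s m = (1 - s) * q m + s * eta m.
Proof. by rewrite /mix; ring. Qed.

Lemma mix_ge0 q eta s m : simplex q -> simplex eta -> 0 <= s -> s <= 1 ->
  0 <= mix q eta s m.
Proof.
by move=> [q0 _] [eta0 _] s0 s1; rewrite mixE addr_ge0 ?mulr_ge0 ?subr_ge0.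
Qed.

Lemma mix_gt0 q eta s m : simplex eta -> 0 <= s -> s < 1 -> 0 < q m ->
  0 < mix q eta s m.
Proof.
by move=> [eta0 _] s0 s1 qm; rewrite mixE ltr_pwDl ?mulr_gt0 ?mulr_ge0 ?subr_gt0.
Qed.

Lemma sum_off_supp_ln_mix_le q eta s m0 :
  simplex q -> simplex eta -> 0 < s -> s <= 1 -> ~~ (0 < q m0) ->
  \sum_(m | ~~ (0 < q m)) (eta m - q m) * ln (mix q eta s m) <= eta m0 * ln s.
Proof.
move=> q_sx eta_sx s0 s1 qm0.
apply: (@le_trans _ _ (\sum_(m | ~~ (0 < q m)) eta m * ln s)).
  apply: ler_sum => m /(simplex_supp0 q_sx) qm.
  by rewrite /mix qm !subr0 add0r mul_ln_mulr_le // eta_sx.1 simplex_le1.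
rewrite -mulr_suml; apply: ler_wnM2r; first exact: ln_le0.
by rewrite (bigD1 m0) //= lerDl sumr_ge0 // => m _; exact: eta_sx.1.
Qed.

Lemma sum_mixM q eta s (f : M -> R) :
  \sum_m mix q eta s m * f m =
  \sum_m q m * f m + s * (\sum_m eta m * f m - \sum_m q m * f m).
Proof.
rewrite -sumrB mulr_sumr -big_split.
by apply: eq_bigr => m _ /=; rewrite /mix; ring.
Qed.

Lemma DeltaD_mix F eta q s : simplex eta -> DeltaD F eta q ->
  (forall m, 0 <= mix q eta s m) -> DeltaD F eta (mix q eta s).
Proof.
move=> [_ eta1] [[_ q1] qF] mix_ge0; split; last first.
  by move=> f /qF eq_f; rewrite sum_mixM eq_f subrr mulr0 addr0.
split => //.
have -> : \sum_m mix q eta s m = \sum_m q m + s * (\sum_m eta m - \sum_m q m).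
  by rewrite -sumrB mulr_sumr -big_split.
by rewrite eta1 q1 subrr mulr0 addr0.
Qed.

Lemma maximizer_mix_slope F eta q s : simplex eta -> entropy_maximizer F eta q ->
  eta <> q -> s != 0 -> (forall m, 0 <= mix q eta s m) ->
  (forall m, 0 < q m -> 0 < mix q eta s m) ->
  0 < s * \sum_m (eta m - q m) * ln (mix q eta s m).
Proof.
move=> eta_sx [qD qmax] neq_eta_q s0 mix_ge0 mix_supp.
have mixD := DeltaD_mix eta_sx qD mix_ge0.
have neq_mix_q : mix q eta s <> q.
  move=> eq_mix_q; apply/neq_eta_q/funext => m.
  have /eqP := congr1 (fun p => p m) eq_mix_q.
  rewrite /mix -subr_eq0 addrAC subrr add0r mulf_eq0 (negbTE s0).
  by rewrite subr_eq0 => /eqP.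
have := qmax _ mixD neq_mix_q; have := gibbs_le qD.1 mixD.1 mix_supp.
have -> : s * \sum_m (eta m - q m) * ln (mix q eta s m) =
    \sum_m mix q eta s m * ln (mix q eta s m) - \sum_m q m * ln (mix q eta s m).
  by rewrite -sumrB mulr_sumr; apply: eq_bigr => m _; rewrite /mix; ring.
rewrite [entropy (mix _ _ _)]entropyE; lra.
Qed.

Lemma cvg_mix q eta m : mix q eta s m @[s --> (0 : R)] --> q m.
Proof.
rewrite -[X in _ --> X]addr0 -[X in _ + X](mul0r (eta m - q m)).
apply: (@cvgD _ _ _ _ _ (fun=> q m) (fun s => s * (eta m - q m))).
  exact: cvg_cst.
exact: cvgM cvg_id (cvg_cst _).
Qed.

Lemma cvg_sum_ln_mix q eta :
  \sum_(m | 0 < q m) (eta m - q m) * ln (mix q eta s m) @[s --> (0 : R)] -->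
  \sum_(m | 0 < q m) (eta m - q m) * ln (q m).
Proof.
apply: cvg_big => [|m qm]; first exact: add_continuous.
apply: cvgM; first exact: cvg_cst.
exact: cvg_comp (@cvg_mix q eta m) (continuous_ln qm).
Qed.

Lemma near0_mix_supp q eta :
  \forall s \near (0 : R), forall m, 0 < q m -> 0 < mix q eta s m.
Proof.
apply: (@filter_forall _ _ (fun m s => 0 < q m -> 0 < mix q eta s m) (nbhs 0) _).
move=> m.
have [qm|_] := ltP 0 (q m); last by near=> s.
by near=> s => _; near: s; exact: cvgr_gt (@cvg_mix q eta m) _ qm.
Unshelve. all: by end_near.
Qed.

Lemma maximizer_supp F eta q m0 : simplex eta -> entropy_maximizer F eta q ->
  0 < eta m0 -> 0 < q m0.
Proof.
move=> eta_sx qmax eta_m0; have [[q_sx _] _] := qmax.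
apply: contrapT => /negP nqm0; have qm0 := simplex_supp0 q_sx nqm0.
have neq_eta_q : eta <> q.
  by move=> /(congr1 (fun p => p m0)) /eqP; rewrite qm0 gt_eqF.
set D := \sum_(m | 0 < q m) (eta m - q m) * ln (q m).
suff: \forall s \near (0 : R)^'+, False by move=> /filter_ex[].
near=> s.
have s_gt0 : 0 < s by near: s; exact: nbhs_right_gt.
have s_lt1 : s < 1 by near: s; exact: nbhs_right_lt.
have := maximizer_mix_slope eta_sx qmax neq_eta_q (lt0r_neq0 s_gt0)
  (fun m => mix_ge0 m q_sx eta_sx (ltW s_gt0) (ltW s_lt1))
  (fun m => mix_gt0 eta_sx (ltW s_gt0) s_lt1).
rewrite pmulr_rgt0 // (bigID (fun m => 0 < q m)) /=.
have supp_lt : \sum_(m | 0 < q m) (eta m - q m) * ln (mix q eta s m) < D + 1.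
  near: s; apply: cvgr_lt (cvg_at_right_filter (@cvg_sum_ln_mix q eta)) _ _.
  by rewrite ltrDl.
have off_supp_le := sum_off_supp_ln_mix_le q_sx eta_sx s_gt0 (ltW s_lt1) nqm0.
have ln_s_lt : eta m0 * ln s < - (D + 1).
  rewrite mulrC -ltr_pdivlMr //.
  by near: s; exact: cvgrNy_lt (@lnNy R) _.
lra.
Unshelve. all: by end_near.
Qed.

Lemma maximizer_stationary F eta q : simplex eta -> entropy_maximizer F eta q ->
  \sum_m eta m * ln (q m) = \sum_m q m * ln (q m).
Proof.
move=> eta_sx qmax; have [[q_sx _] _] := qmax.
have [->//|neq_eta_q] := pselect (eta = q).
have off_supp m : ~~ (0 < q m) -> q m = 0 /\ eta m = 0.
  move=> nqm; split; first exact: simplex_supp0 nqm.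
  exact: simplex_supp0 eta_sx (contra (maximizer_supp eta_sx qmax) nqm).
have sum_supp s : \sum_(m | 0 < q m) (eta m - q m) * ln (mix q eta s m) =
                  \sum_m (eta m - q m) * ln (mix q eta s m).
  by apply: big_rmcond => m /off_supp[-> ->]; rewrite subrr mul0r.
have slope : \forall s \near (0 : R),
    s != 0 -> 0 < s * \sum_(m | 0 < q m) (eta m - q m) * ln (mix q eta s m).
  near=> s => s0.
  have mix_supp : forall m, 0 < q m -> 0 < mix q eta s m.
    by near: s; exact: near0_mix_supp.
  rewrite sum_supp; apply: (maximizer_mix_slope eta_sx qmax) => // m.
  have [/mix_supp/ltW //|/off_supp[qm0 etam0]] := boolP (0 < q m).
  by rewrite /mix qm0 etam0 subrr mulr0 addr0.
have D0 := cvg_eq0_sign_change (@cvg_sum_ln_mix q eta) slope.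
apply/eqP; rewrite -subr_eq0 -!sum_supp_ln -sumrB; apply/eqP.
by rewrite -[RHS]D0; apply: eq_bigr => m _; rewrite mulrBl.
Unshelve. all: by end_near.
Qed.

Lemma inducible_stationary eta q : simplex q -> simplex eta ->
  (forall m, 0 < eta m -> 0 < q m) ->
  \sum_m eta m * ln (q m) = \sum_m q m * ln (q m) -> inducible q eta.
Proof.
move=> q_sx eta_sx supp_eta cross.
pose off_supp m : R := (~~ (0 < q m))%:R.
have sum_off p : (forall m, ~~ (0 < q m) -> p m = 0) -> \sum_m p m * off_supp m = 0.
  move=> p0; apply: big1 => m _; rewrite /off_supp.
  by case: (boolP (0 < q m)) => [_|/p0 ->]; rewrite ?mulr0 ?mul0r.
have eta_off m : ~~ (0 < q m) -> eta m = 0.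
  by move=> nqm; exact: simplex_supp0 eta_sx (contra (supp_eta m) nqm).
exists (fun f => f = (fun m => ln (q m)) \/ f = off_supp); split.
  by split=> // f [->|->]; rewrite ?cross // !sum_off // => m /(simplex_supp0 q_sx).
move=> q' [q'_sx q'F] neq_q'q.
have q'_off : \sum_m q' m * off_supp m = 0.
  by rewrite q'F ?(sum_off _ eta_off) //; right.
have q'_supp m : 0 < q' m -> 0 < q m.
  apply: contraTT => nqm.
  have q'_ge0 i : true -> 0 <= q' i * off_supp i.
    by rewrite mulr_ge0 ?q'_sx.1 ?ler0n.
  have := psumr_eq0P q'_ge0 q'_off (i := m) isT.
  by rewrite /off_supp nqm mulr1 => ->; rewrite ltxx.
apply: (lt_le_trans (gibbs_lt q'_sx q_sx q'_supp neq_q'q)).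
by rewrite q'F; [rewrite cross entropyE | left].
Qed.

End InducedBelief.

Theorem lemma2 (R : realType) (M : finType) (q eta : M -> R) :
  simplex q -> simplex eta ->
  (inducible q eta <->
   ((forall m, supp eta m -> supp q m) /\
    \sum_(m : M | 0 < q m) eta m * ln (q m) =
    \sum_(m : M | 0 < q m) q m * ln (q m))).
Proof.
move=> q_sx eta_sx; rewrite !sum_supp_ln; split.
  move=> [F qmax]; split; first by move=> m; exact: maximizer_supp eta_sx qmax.
  exact: maximizer_stationary eta_sx qmax.
by move=> [supp_eta cross]; exact: inducible_stationary.
Qed.
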